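(* Let $\lambda/\mu$ be a connected r-shape with column flags $\mathbf a,\mathbf b$, and let $\Theta=(\theta_1,\ldots,\theta_k)$ be an outer ribbon decomposition of $\lambda/\mu$. For every $i,j$ such that $\theta_i\#\theta_j$ is defined and nonempty, the induced ribbon flags $\mathbf a^{ij},\mathbf b^{ij}$ are column flags for the r-shape $\theta_i\#\theta_j$.
   Context: Young diagrams in English notation; $\mathrm{row}(\gamma),\mathrm{col}(\gamma)$ the row and column of a cell. An r-shape is $(\lambda/\mu,r)$, $r\in\mathbb Z$, with shifted contents $c(i,j)=j-i+r-1+\lambda'_1$ (bottom-left cell content $r$); connected means edgewise connected diagram. Column flags for an r-shape $\kappa/\nu$ with $N\ge\kappa_1$: $\mathbf a,\mathbf b\in\mathbb Z^N$ with $a_i-a_{i+1}\le\nu'_i-\nu'_{i+1}+1$ and $b_i-b_{i+1}\le\kappa'_i-\kappa'_{i+1}+1$ whenever $\nu'_i<\kappa'_{i+1}$. A ribbon is an edgewise connected skew diagram with no $2\times2$ block; head = bottom-left cell, tail = top-right cell. A cell of $\lambda/\mu$ is on the top (right, bottom, left) perimeter if the cell directly above (right, below, left) is not in $\lambda/\mu$. An outer ribbon decomposition $(\theta_1,\ldots,\theta_k)$ of $\lambda/\mu$ partitions its cells into ribbons with each head on the left or bottom perimeter and each tail on the top or right perimeter. A cell $\gamma\in\theta_i$ goes up if the cell directly above is in $\theta_i$ or $\gamma$ is the tail of $\theta_i$ on the top perimeter; goes right if the cell directly to its right is in $\theta_i$ or $\gamma$ is the tail of $\theta_i$ on the right perimeter;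 the top-right cell of $\lambda/\mu$ (in $\theta_i$) goes up if the cell directly below is in $\theta_i$ and right if the cell directly to its left is in $\theta_i$. All cells of a given content go in the same direction. The cutting strip is the ribbon whose cells have exactly the contents occurring in $\lambda/\mu$, with the cell of content $c+1$ directly above (resp. right of) that of content $c$ when the cells of content $c$ go up (resp. right). $\Theta(p,q)$ is its sub-ribbon of contents in $[p,q]$, an r-shape with root content $p$; it is $\varnothing$ if $p=q+1$ and undefined if $p>q+1$. $\theta_i\#\theta_j=\Theta(c(\delta_i),c(\gamma_j))$ with $\delta_i$ the head of $\theta_i$, $\gamma_j$ the tail of $\theta_j$. Canonical decomposition: $\theta=\rho_1\to\cdots\to\rho_K$ with $\rho_r$ the maximal vertical strips (column segments) of $\theta$ from left to right. Induced ribbon flags of $\theta_i\#\theta_j=\rho_1\to\cdots\to\rho_K$: with $\delta_r,\gamma_r$ the bottom and top cells of $\rho_r$, $M_r$ the rightmost cell of $\lambda/\mu$ of content $c(\delta_r)$, $m_r$ the leftmost cell of $\lambda/\mu$ of content $c(\gamma_r)$ (rows/columns measured in $\lambda/\mu$): $a^{ij}_r=a_{\mathrm{col}(m_r)}-(\mu'_{\mathrm{col}(m_r)}+1)+\mathrm{row}(m_r)$, $b^{ij}_r=b_{\mathrm{col}(M_r)}-\lambda'_{\mathrm{col}(M_r)}+\mathrm{row}(M_r)$. *)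

From mathcomp Require Import all_boot all_order all_algebra.
Set Implicit Arguments. Unset Strict Implicit. Unset Printing Implicit Defensive.
Import Order.TTheory GRing.Theory Num.Theory.

(* Cells are pairs (row, column), 1-indexed, English notation. *)
Definition cell := (nat * nat)%type.

(* A partition is a weakly decreasing sequence of naturals;
   lambda_i = nth 0 la (i-1).  Trailing zeros are harmless. *)
Definition is_partition (la : seq nat) : Prop := sorted geq la.

Definition subpart (mu la : seq nat) : Prop :=
  forall i, (nth 0 mu i <= nth 0 la i)%N.

Definition conj (la : seq nat) (j : nat) : nat := count (fun x => j <= x)%N la.

Definition in_skew (la mu : seq nat) (x : cell) : bool :=
  (0 < x.1)%N && (nth 0 mu x.1.-1 < x.2 <= nth 0 la x.1.-1)%N.

Definition cells (la mu : seq nat) : seq cell :=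
  [seq x <- [seq (i, j) | i <- iota 1 (size la), j <- iota 1 (nth 0 la i.-1)]
     | in_skew la mu x].

Definition cont (ka : seq nat) (r : int) (x : cell) : int :=
  (x.2%:Z - x.1%:Z + r - 1 + (conj ka 1)%:Z)%R.

Definition adj : rel cell := fun x y =>
  ((x.1 == y.1) && ((x.2 == y.2.+1) || (y.2 == x.2.+1))) ||
  ((x.2 == y.2) && ((x.1 == y.1.+1) || (y.1 == x.1.+1))).

Definition edge_connected (S : pred cell) : Prop :=
  forall x y, S x -> S y ->
    exists s : seq cell, [/\ path adj x s, last x s = y & all S s].

Definition connected_skew (la mu : seq nat) : Prop :=
  edge_connected (in_skew la mu).

(* Column flags for the r-shape ka/nu, a, b in Z^N (indices 1..N). *)
Definition column_flags (ka nu : seq nat) (N : nat) (a b : nat -> int) : Prop :=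
  forall i, (1 <= i)%N -> (i < N)%N -> (conj nu i < conj ka i.+1)%N ->
    (a i - a i.+1 <= (conj nu i)%:Z - (conj nu i.+1)%:Z + 1)%R /\
    (b i - b i.+1 <= (conj ka i)%:Z - (conj ka i.+1)%:Z + 1)%R.

Definition is_skew_diagram (S : pred cell) : Prop :=
  exists ka nu, [/\ is_partition ka, is_partition nu, subpart nu ka &
                    forall x, S x = in_skew ka nu x].

Definition no_2x2 (S : pred cell) : Prop :=
  forall i j, ~~ [&& S (i, j), S (i.+1, j), S (i, j.+1) & S (i.+1, j.+1)].

Definition is_ribbon (S : pred cell) : Prop :=
  [/\ edge_connected S, no_2x2 S & is_skew_diagram S].

(* head = bottom-left cell (leftmost column, lowest in it);
   tail = top-right cell (rightmost column, highest in it).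
   Stated for sets of cells contained in la/mu. *)
Definition is_head (la mu : seq nat) (th : pred cell) (x : cell) : bool :=
  th x && all (fun y => th y ==> ((x.2 < y.2) || ((x.2 == y.2) && (y.1 <= x.1))))%N
              (cells la mu).

Definition is_tail (la mu : seq nat) (th : pred cell) (x : cell) : bool :=
  th x && all (fun y => th y ==> ((y.2 < x.2) || ((x.2 == y.2) && (x.1 <= y.1))))%N
              (cells la mu).

Definition top_per (la mu : seq nat) (x : cell) := ~~ in_skew la mu (x.1.-1, x.2).
Definition right_per (la mu : seq nat) (x : cell) := ~~ in_skew la mu (x.1, x.2.+1).
Definition bottom_per (la mu : seq nat) (x : cell) := ~~ in_skew la mu (x.1.+1, x.2).
Definition left_per (la mu : seq nat) (x : cell) := ~~ in_skew la mu (x.1, x.2.-1).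

Definition Th_at (Th : seq (pred cell)) (i : nat) : pred cell :=
  nth (fun _ => false) Th i.

(* outer ribbon decomposition (theta_1, ..., theta_k) = Th (0-indexed list) *)
Definition outer_ribbon_decomposition (la mu : seq nat) (Th : seq (pred cell)) : Prop :=
  [/\ forall i, (i < size Th)%N ->
        let th := Th_at Th i in
        [/\ is_ribbon th,
            forall x, th x -> in_skew la mu x,
            exists d, is_head la mu th d && (left_per la mu d || bottom_per la mu d) &
            exists g, is_tail la mu th g && (top_per la mu g || right_per la mu g)],
      forall x, in_skew la mu x -> exists2 i, (i < size Th)%N & Th_at Th i x &
      forall i i' x, (i < size Th)%N -> (i' < size Th)%N ->
        Th_at Th i x -> Th_at Th i' x -> i = i'].

(* direction of a cell x of the ribbon th (true = goes up) *)
Definition goes_up (la mu : seq nat) (th : pred cell) (x : cell) : bool :=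
  if is_tail la mu (in_skew la mu) x
  then th (x.1.+1, x.2)
  else th (x.1.-1, x.2) || (is_tail la mu th x && top_per la mu x).

(* cells of content c go up (all cells of a given content go the same way;
   we say content c goes up when some cell of content c goes up) *)
Definition content_up (la mu : seq nat) (r : int) (Th : seq (pred cell)) (c : int) : bool :=
  has (fun th => has (fun x => th x && (cont la r x == c) && goes_up la mu th x)
                     (cells la mu)) Th.

(* The sub-ribbon Theta(p,q) of the cutting strip, for p <= q, placed
   minimally: rows 1..R, columns 1..K, head at (R,1), tail at (1,K).
   Step t (0 <= t <= n, n = q - p) is the cell of content p + t. *)
Section Strip.
Variables (la mu : seq nat) (r : int) (Th : seq (pred cell)) (p q : int).

Definition strip_len : nat := `|q - p|%N.
Definition strip_up (t : nat) : bool := content_up la mu r Th (p + t%:Z)%R.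
Definition strip_U (t : nat) : nat := count strip_up (iota 0 t).
Definition strip_R : nat := (strip_U strip_len).+1.
Definition strip_K : nat := (strip_len - strip_U strip_len).+1.
Definition strip_cell (t : nat) : cell := (strip_R - strip_U t, (t - strip_U t).+1)%N.
Definition strip_cells : seq cell := map strip_cell (iota 0 strip_len.+1).
(* outer and inner partitions kappa, nu with Theta(p,q) = kappa/nu *)
Definition strip_kappa : seq nat :=
  [seq \max_(x <- strip_cells | x.1 == i) x.2 | i <- iota 1 strip_R].
Definition strip_nu : seq nat :=
  [seq (\big[minn/strip_K]_(x <- strip_cells | x.1 == i) x.2).-1 | i <- iota 1 strip_R].
End Strip.

Definition leftmost_of_content (la mu : seq nat) (r c : int) (m : cell) : Prop :=
  [/\ in_skew la mu m, cont la r m = c &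
      forall y, in_skew la mu y -> cont la r y = c -> (m.2 <= y.2)%N].
Definition rightmost_of_content (la mu : seq nat) (r c : int) (M : cell) : Prop :=
  [/\ in_skew la mu M, cont la r M = c &
      forall y, in_skew la mu y -> cont la r y = c -> (y.2 <= M.2)%N].

(* a', b' are the induced ribbon flags of Theta(p,q) = rho_1 -> ... -> rho_K:
   rho_r is column r of kappa/nu, with bottom cell delta_r = (kappa'_r, r)
   and top cell gamma_r = (nu'_r + 1, r); contents are those of the r-shape
   Theta(p,q) with root content p. *)
Definition induced_flags (la mu : seq nat) (r : int) (Th : seq (pred cell))
    (a b : nat -> int) (p q : int) (a' b' : nat -> int) : Prop :=
  let ka := strip_kappa la mu r Th p q in
  let nu := strip_nu la mu r Th p q in
  forall s, (1 <= s <= strip_K la mu r Th p q)%N ->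
    forall m M,
      leftmost_of_content la mu r (cont ka p ((conj nu s).+1, s)) m ->
      rightmost_of_content la mu r (cont ka p (conj ka s, s)) M ->
      a' s = (a m.2 - ((conj mu m.2)%:Z + 1) + m.1%:Z)%R /\
      b' s = (b M.2 - (conj la M.2)%:Z + M.1%:Z)%R.

(* Let alpha(m) = a_(col m) - mu'_(col m) - 1 + row m: this is the value a^{ij} takes on a
   column of Theta(p,q) whose top cell has leftmost representative m in lambda/mu.
   If m and m' are the leftmost cells of contents c and c+1, then by convexity of skew
   shapes m' sits either directly above m, where alpha drops by exactly 1, or directly
   to the right of m, where the column-flag inequality for a at col m says that alpha
   drops by at most 1.  As lambda/mu is connected, every content between two occurring
   contents occurs, so alpha drops by at most c2 - c1 from content c1 to content c2.
   The tops of columns s and s+1 of Theta(p,q) have contents in [p,q] differing by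
   exactly nu'_s - nu'_(s+1) + 1, which is the required bound.  Bottom cells, rightmost
   representatives and b are handled dually.  The argument never uses the condition
   nu'_s < kappa'_(s+1), so the inequalities hold for every s. *)

From mathcomp Require Import all_boot all_order all_algebra.
From mathcomp Require Import zify.
Import Order.TTheory GRing.Theory Num.Theory.

Lemma partition_nth_antitone {la i j} :
  is_partition la -> i <= j -> nth 0 la j <= nth 0 la i.
Proof.
move=> la_part le_ij; case: (leqP (size la) j) => [j_big|j_lt].
  by rewrite nth_default.
by apply: (sorted_leq_nth (rev_trans leq_trans) leqnn 0 la_part); rewrite ?inE //; lia.
Qed.

Lemma ltn_conj la k i :
  is_partition la -> 0 < k -> (i < conj la k) = (k <= nth 0 la i).
Proof.
rewrite /conj; elim: la i => [|x l IH] i /= x_l k_gt0; first by rewrite nth_nil; lia.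
have l_below : all (fun y => y <= x) l := order_path_min (rev_trans leq_trans) x_l.
have [k_le_x|x_lt_k] := leqP k x.
  by case: i => [|i] //=; rewrite add1n ltnS IH //; exact: path_sorted x_l.
have -> : count (fun y => k <= y) l = 0.
  by rewrite (@eq_in_count _ _ pred0) ?count_pred0 // => y /(allP l_below) /=; lia.
rewrite ltn0; apply/esym/negbTE; rewrite -ltnNge.
case: i => [|i] //=.
have [i_big|i_lt] := leqP (size l) i; first by rewrite nth_default.
by have /= := allP l_below _ (mem_nth 0 i_lt); lia.
Qed.

Lemma conj_succ_le la s : conj la s.+1 <= conj la s.
Proof. by apply: sub_count => x /=; apply: ltnW. Qed.

Lemma count_iota_le X R : X <= R -> count (fun i => i <= X) (iota 1 R) = X.
Proof.
move=> le_XR; rewrite -(subnKC le_XR) iotaD count_cat.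
rewrite (@eq_in_count _ _ predT) ?count_predT ?size_iota; last first.
  by move=> i; rewrite mem_iota /=; lia.
by rewrite (@eq_in_count _ _ pred0) ?count_pred0 ?addn0 // => i; rewrite mem_iota /=; lia.
Qed.

Lemma bigmax_geq_has (T : Type) (l : seq T) (P : pred T) (F : T -> nat) s :
  0 < s -> (s <= \max_(x <- l | P x) F x) = has (fun x => P x && (s <= F x)) l.
Proof.
move=> s_gt0; elim: l => [|x l IH]; first by rewrite big_nil /= leqNgt s_gt0.
by rewrite big_cons /=; case: (P x) => //=; rewrite leq_max IH.
Qed.

Lemma bigmin_gt_all (T : Type) (l : seq T) (P : pred T) (F : T -> nat) s K :
  (s < \big[minn/K]_(x <- l | P x) F x) = (s < K) && all (fun x => P x ==> (s < F x)) l.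
Proof.
elim: l => [|x l IH]; first by rewrite big_nil /= andbT.
rewrite big_cons /=; case: (P x) => //=.
by rewrite leq_min IH; case: (s < F x); case: (s < K).
Qed.

Lemma unit_step_ivt (f : nat -> nat) t1 t2 v :
  (forall t, f t <= f t.+1 <= (f t).+1) -> t1 <= t2 -> f t1 <= v <= f t2 ->
  exists2 t, t1 <= t <= t2 & f t = v.
Proof.
move=> f_step; elim: t2 => [|t2 IH] le_t12 f_v.
  by move: le_t12 f_v; rewrite leqn0 => /eqP ->; exists 0; lia.
have [eq_t1|ne_t1] := eqVneq t1 t2.+1; first by move: f_v; rewrite eq_t1; exists t2.+1; lia.
have [v_le|f_lt] := leqP v (f t2).
  by have [t t_in ft] := IH ltac:(lia) ltac:(lia); exists t; first lia.
by exists t2.+1; have := f_step t2; lia.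
Qed.

Section LatticePath.
Variables (up : nat -> bool) (L : nat).

Definition rise t := count up (iota 0 t).
Definition run t := t - rise t.

Lemma riseS t : rise t.+1 = rise t + up t.
Proof. by rewrite /rise -addn1 iotaD count_cat /= addn0. Qed.

Lemma rise0 : rise 0 = 0.
Proof. by []. Qed.

Lemma rise_le t : rise t <= t.
Proof. by rewrite /rise (leq_trans (count_size _ _)) ?size_iota. Qed.

Lemma runS t : run t.+1 = run t + ~~ up t.
Proof. by rewrite /run riseS; have := rise_le t; case: (up t) => /=; lia. Qed.

Lemma rise_step t : rise t <= rise t.+1 <= (rise t).+1.
Proof. by rewrite riseS; case: (up t) => /=; lia. Qed.

Lemma rise_mono {t t'} : t <= t' -> rise t <= rise t'.
Proof. by move: t t'; apply: (homo_leq leqnn leq_trans) => t; rewrite riseS leq_addr. Qed.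

Lemma run_mono {t t'} : t <= t' -> run t <= run t'.
Proof. by move: t t'; apply: (homo_leq leqnn leq_trans) => t; rewrite runS leq_addr. Qed.

Definition path_rows := (rise L).+1.
Definition path_cols := (run L).+1.
Definition path_cell t : cell := (path_rows - rise t, (run t).+1).
Definition path_cells := map path_cell (iota 0 L.+1).
Definition path_kappa : seq nat :=
  [seq \max_(x <- path_cells | x.1 == i) x.2 | i <- iota 1 path_rows].
Definition path_nu : seq nat :=
  [seq (\big[minn/path_cols]_(x <- path_cells | x.1 == i) x.2).-1 | i <- iota 1 path_rows].

Definition first_in_column s t :=
  [/\ t <= L, (run t).+1 = s & forall t', t' < t -> (run t').+1 < s].
Definition last_in_column s t :=
  [/\ t <= L, (run t).+1 = s & forall t', t < t' <= L -> s < (run t').+1].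

Lemma first_in_column_exists {s} : 0 < s <= path_cols -> exists t, first_in_column s t.
Proof.
rewrite /path_cols => s_col; have ex_t : exists t, s <= (run t).+1 by exists L; lia.
case: (ex_minnP ex_t) => t s_le t_min.
have t_le : t <= L by apply: t_min; lia.
have before t' : t' < t -> (run t').+1 < s.
  by move=> lt_t't; rewrite ltnNge; apply/negP => /t_min; lia.
exists t; split => //; case: t s_le t_min t_le before => [|t] s_le _ _ before.
  by move: s_le; rewrite /run /=; lia.
by have := before t (ltnSn t); move: s_le; rewrite runS; case: (up t) => /=; lia.
Qed.

Lemma last_in_column_exists {s} : 0 < s <= path_cols -> exists t, last_in_column s t.
Proof.
rewrite /path_cols => s_col; pose P t := (t <= L) && ((run t).+1 <= s).
have ex_t : exists t, P t by exists 0; rewrite /P /run /=; lia.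
have P_le t : P t -> t <= L by case/andP.
case: (ex_maxnP ex_t P_le) => t /andP[t_le run_t] t_max.
have after t' : t < t' <= L -> s < (run t').+1.
  move=> /andP[lt_tt' t'_le]; rewrite ltnNge; apply/negP => run_t'.
  by have := t_max t'; rewrite /P t'_le run_t'; lia.
exists t; split => //.
have [eq_tL|ne_tL] := eqVneq t L; first by move: run_t s_col; rewrite eq_tL; lia.
by have := after t.+1 ltac:(lia); rewrite runS; move: run_t; case: (up t) => /=; lia.
Qed.

Lemma conj_path_kappa {s t} : 0 < s -> first_in_column s t ->
  conj path_kappa s = path_rows - rise t.
Proof.
move=> s_gt0 [t_le col_t before].
rewrite /conj /path_kappa count_map -[RHS](@count_iota_le _ path_rows); last lia.
apply: eq_in_count => i; rewrite mem_iota => i_row /=.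
rewrite /path_cells big_map bigmax_geq_has //.
apply/hasP/idP => [[t'] | i_le].
  rewrite mem_iota /path_cell /= => t'_le /andP[/eqP <- s_le].
  have le_tt' : t <= t' by rewrite leqNgt; apply/negP => /before; lia.
  by have := rise_mono le_tt'; lia.
have rise_L := rise_mono t_le.
have [t' /andP[le_tt' t'_le] rise_t'] :=
  @unit_step_ivt rise t L (path_rows - i) rise_step t_le
    ltac:(rewrite /path_rows in i_row i_le *; lia).
exists t'; first by rewrite mem_iota; lia.
rewrite /path_cell /= rise_t'; apply/andP; split.
  by apply/eqP; rewrite /path_rows in i_row *; lia.
by have := run_mono le_tt'; lia.
Qed.

Lemma conj_path_nu {s t} : 0 < s -> last_in_column s t ->
  conj path_nu s = path_rows - rise t - 1.
Proof.
move=> s_gt0 [t_le col_t after].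
have rise_L := rise_mono t_le.
rewrite /conj /path_nu count_map -[RHS](@count_iota_le _ path_rows); last lia.
apply: eq_in_count => i; rewrite mem_iota => i_row /=.
have ge_pred m : (s <= m.-1) = (s < m).
  by case: m => [|m] /=; [rewrite ltn0 leqNgt s_gt0 | rewrite ltnS].
rewrite ge_pred /path_cells big_map bigmin_gt_all.
have [eq_tL|ne_tL] := eqVneq t L.
  by move: col_t; rewrite eq_tL /path_cols /path_rows in i_row * => <-; rewrite ltnn; lia.
have s_lt : s < path_cols by have := after L; rewrite /path_cols; lia.
rewrite s_lt andTb; apply/allP/idP => [row_i_right | i_le t'].
  rewrite leqNgt; apply/negP => i_gt; have rise_0 := rise0.
  have [t' /andP[_ t'_le] rise_t'] :=
    @unit_step_ivt rise 0 t (path_rows - i) rise_step (leq0n t)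
      ltac:(rewrite /path_rows in i_row i_gt *; lia).
  have t'_in : t' \in iota 0 L.+1 by rewrite mem_iota; lia.
  have row_t' : (path_cell t').1 = i by rewrite /= rise_t' /path_rows in i_row *; lia.
  have := implyP (row_i_right t' t'_in); rewrite row_t' eqxx => /(_ isT) /=.
  by have := run_mono t'_le; lia.
rewrite mem_iota /path_cell /= => t'_le; apply/implyP => /eqP row_t'.
have lt_tt' : t < t'.
  by rewrite ltnNge; apply/negP => /rise_mono; rewrite /path_rows in row_t' i_le *; lia.
by apply: after; lia.
Qed.

Lemma path_column_bottom {s} : 0 < s <= path_cols ->
  exists2 t, t <= L & (conj path_kappa s, s) = path_cell t.
Proof.
move=> s_col; have [t first_t] := first_in_column_exists s_col.
have [t_le col_t _] := first_t; exists t => //.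
by rewrite (conj_path_kappa _ first_t) /path_cell ?col_t //; case/andP: s_col.
Qed.

Lemma path_column_top {s} : 0 < s <= path_cols ->
  exists2 t, t <= L & ((conj path_nu s).+1, s) = path_cell t.
Proof.
move=> s_col; have [t last_t] := last_in_column_exists s_col.
have [t_le col_t _] := last_t; exists t => //.
rewrite (conj_path_nu _ last_t) /path_cell ?col_t; last by case/andP: s_col.
by have := rise_mono t_le; rewrite /path_rows => ?; congr (_, _); lia.
Qed.

Lemma cont_path_cell p t : t <= L -> cont path_kappa p (path_cell t) = (p + t%:Z)%R.
Proof.
have first0 : first_in_column 1 0 by split.
move=> t_le; rewrite /cont (conj_path_kappa _ first0) // /path_cell /path_rows /=.
by have := rise0; have := rise_mono t_le; have := rise_le t; rewrite /run; lia.
Qed.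

Lemma cont_path_column_ends p s : 0 < s <= path_cols ->
  (p <= cont path_kappa p ((conj path_nu s).+1, s) <= p + L%:Z)%R /\
  (p <= cont path_kappa p (conj path_kappa s, s) <= p + L%:Z)%R.
Proof.
move=> s_col; have [t t_le ->] := path_column_top s_col.
have [t' t'_le ->] := path_column_bottom s_col.
by rewrite !cont_path_cell //; lia.
Qed.

End LatticePath.

Lemma strip_kappaE la mu r Th p q :
  strip_kappa la mu r Th p q = path_kappa (strip_up la mu r Th p) (strip_len p q).
Proof. by []. Qed.

Lemma strip_nuE la mu r Th p q :
  strip_nu la mu r Th p q = path_nu (strip_up la mu r Th p) (strip_len p q).
Proof. by []. Qed.

Lemma strip_KE la mu r Th p q :
  strip_K la mu r Th p q = path_cols (strip_up la mu r Th p) (strip_len p q).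
Proof. by []. Qed.

Section Telescope.
Variables (T : Type) (P : int -> T -> Prop) (f : T -> int).
Hypothesis P_unique : forall {c x y}, P c x -> P c y -> x = y.
Hypothesis P_between : forall {c1 c2} c {x1 x2},
  P c1 x1 -> P c2 x2 -> (c1 <= c <= c2)%R -> exists x, P c x.
Hypothesis P_step : forall {c x y}, P c x -> P (c + 1)%R y -> (f x - f y <= 1)%R.

Lemma telescope_bound c1 c2 x1 x2 :
  P c1 x1 -> P c2 x2 -> (c1 <= c2)%R -> (f x1 - f x2 <= c2 - c1)%R.
Proof.
move=> P1 P2 le_c12.
suff bound n x : P (c1 + n%:Z)%R x -> (f x1 - f x <= n%:Z)%R.
  have c2E : c2 = (c1 + `|c2 - c1|%N%:Z)%R by lia.
  by move: P2; rewrite c2E => /bound; lia.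
elim: n x => [|n IH] x Px.
  by rewrite addr0 in Px; rewrite (P_unique P1 Px) subrr.
have [y Py] := P_between (c1 + n%:Z)%R P1 Px ltac:(lia).
rewrite -addn1 PoszD addrA in Px.
by have := IH y Py; have := P_step Py Px; lia.
Qed.
End Telescope.

Definition induced_a (mu : seq nat) (a : nat -> int) (m : cell) : int :=
  (a m.2 - ((conj mu m.2)%:Z + 1) + m.1%:Z)%R.
Definition induced_b (la : seq nat) (b : nat -> int) (M : cell) : int :=
  (b M.2 - (conj la M.2)%:Z + M.1%:Z)%R.

Section SkewShape.
Context {la mu : seq nat} {r : int}.
Hypotheses (la_part : is_partition la) (mu_part : is_partition mu).
Hypothesis la_conn : connected_skew la mu.

Lemma in_skew_convex {i1 j1 i2 j2 i j} :
  in_skew la mu (i1, j1) -> in_skew la mu (i2, j2) ->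
  i1 <= i <= i2 -> j1 <= j <= j2 -> in_skew la mu (i, j).
Proof.
rewrite /in_skew /= => cell1 cell2 i_mid j_mid.
have := @partition_nth_antitone mu i1.-1 i.-1 mu_part ltac:(lia).
have := @partition_nth_antitone la i.-1 i2.-1 la_part ltac:(lia).
lia.
Qed.

Lemma mem_cells x : (x \in cells la mu) = in_skew la mu x.
Proof.
rewrite /cells mem_filter; case x_in: (in_skew la mu x) => //=.
case: x x_in => i j; rewrite /in_skew /= => cell_ij.
apply/allpairsPdep; exists i, j; rewrite !mem_iota; split => //; last lia.
have [big|] := leqP (size la) i.-1; last lia.
by rewrite [nth 0 la _]nth_default in cell_ij; lia.
Qed.

Lemma cont_adj {x y} : adj x y ->
  cont la r y = (cont la r x + 1)%R \/ cont la r y = (cont la r x - 1)%R.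
Proof.
case: x y => i j [i' j']; rewrite /adj /cont /=.
by case/orP => /andP[/eqP ? /orP[/eqP ? | /eqP ?]]; lia.
Qed.

Lemma connected_cont_between {x y c} :
  in_skew la mu x -> in_skew la mu y -> (cont la r x <= c <= cont la r y)%R ->
  exists2 z, in_skew la mu z & cont la r z = c.
Proof.
move=> x_in y_in; have [s [x_s last_s s_in]] := la_conn x y x_in y_in.
elim: s x x_in x_s last_s s_in => [|z s IH] x x_in /=; first by move=> _ <- _ c_mid; exists x; lia.
move=> /andP[x_z z_s] last_s /andP[z_in s_in] c_mid.
have [<-|ne_c] := eqVneq (cont la r x) c; first by exists x.
by apply: (IH z) => //; have := cont_adj x_z; lia.
Qed.

Lemma cell_eq_of_cont_col x y : cont la r x = cont la r y -> x.2 = y.2 -> x = y.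
Proof. by case: x y => i j [i' j']; rewrite /cont /= => ? ?; congr (_, _); lia. Qed.

Lemma leftmost_exists z :
  in_skew la mu z -> exists m, leftmost_of_content la mu r (cont la r z) m.
Proof.
move=> z_in; pose P j := has (fun x => (x.2 == j) && (cont la r x == cont la r z)) (cells la mu).
have ex_j : exists j, P j by exists z.2; apply/hasP; exists z; rewrite ?mem_cells ?eqxx.
case: (ex_minnP ex_j) => j /hasP[m]; rewrite mem_cells => m_in /andP[/eqP m_j /eqP m_c] j_min.
exists m; split => // y y_in y_c; rewrite m_j; apply: j_min.
by apply/hasP; exists y; rewrite ?mem_cells ?y_c ?eqxx.
Qed.

Lemma rightmost_exists z :
  in_skew la mu z -> exists M, rightmost_of_content la mu r (cont la r z) M.
Proof.
move=> z_in; pose P j := has (fun x => (x.2 == j) && (cont la r x == cont la r z)) (cells la mu).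
have ex_j : exists j, P j by exists z.2; apply/hasP; exists z; rewrite ?mem_cells ?eqxx.
have P_le j : P j -> j <= nth 0 la 0.
  case/hasP=> x; rewrite mem_cells /in_skew => /and3P[_ _ x_la] /andP[/eqP <- _].
  exact: leq_trans x_la (partition_nth_antitone la_part (leq0n _)).
case: (ex_maxnP ex_j P_le) => j /hasP[M]; rewrite mem_cells => M_in /andP[/eqP M_j /eqP M_c] j_max.
exists M; split => // y y_in y_c; rewrite M_j; apply: j_max.
by apply/hasP; exists y; rewrite ?mem_cells ?y_c ?eqxx.
Qed.

Lemma leftmost_unique c m m' : leftmost_of_content la mu r c m ->
  leftmost_of_content la mu r c m' -> m = m'.
Proof.
move=> [m_in m_c m_min] [m'_in m'_c m'_min].
by apply: cell_eq_of_cont_col; [rewrite m_c m'_c | apply/eqP; rewrite eqn_leq m_min ?m'_min].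
Qed.

Lemma rightmost_unique c M M' : rightmost_of_content la mu r c M ->
  rightmost_of_content la mu r c M' -> M = M'.
Proof.
move=> [M_in M_c M_max] [M'_in M'_c M'_max].
by apply: cell_eq_of_cont_col; [rewrite M_c M'_c | apply/eqP; rewrite eqn_leq M_max ?M'_max].
Qed.

Lemma leftmost_exists_between {x y c} :
  in_skew la mu x -> in_skew la mu y -> (cont la r x <= c <= cont la r y)%R ->
  exists m, leftmost_of_content la mu r c m.
Proof.
by move=> x_in y_in /(connected_cont_between x_in y_in) [z z_in <-]; apply: leftmost_exists.
Qed.

Lemma rightmost_exists_between {x y c} :
  in_skew la mu x -> in_skew la mu y -> (cont la r x <= c <= cont la r y)%R ->
  exists M, rightmost_of_content la mu r c M.
Proof.
by move=> x_in y_in /(connected_cont_between x_in y_in) [z z_in <-]; apply: rightmost_exists.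
Qed.

Context {N : nat} {a b : nat -> int}.
Hypotheses (la_N : nth 0 la 0 <= N) (flags : column_flags la mu N a b).

Lemma column_flags_row_pair {i j} :
  in_skew la mu (i, j) -> in_skew la mu (i, j.+1) ->
  (a j - a j.+1 <= (conj mu j)%:Z - (conj mu j.+1)%:Z + 1)%R /\
  (b j - b j.+1 <= (conj la j)%:Z - (conj la j.+1)%:Z + 1)%R.
Proof.
rewrite /in_skew /= => /and3P[i_gt0 mu_j _] /and3P[_ _ j1_la].
have := partition_nth_antitone la_part (leq0n i.-1).
have j_gt0 : 0 < j by lia.
have mu_j' : conj mu j <= i.-1 by rewrite leqNgt (ltn_conj _ _ _ mu_part) // -ltnNge.
have la_j1 : i.-1 < conj la j.+1 by rewrite (ltn_conj _ _ _ la_part).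
by move=> la_i; apply: flags; lia.
Qed.

Lemma leftmost_step c m m' : leftmost_of_content la mu r c m ->
  leftmost_of_content la mu r (c + 1)%R m' -> (induced_a mu a m - induced_a mu a m' <= 1)%R.
Proof.
case: m m' => i j [i' j'] [m_in m_c m_min] [m'_in m'_c m'_min].
have diag : (j' + i = j + i' + 1)%N by move: m_c m'_c; rewrite /cont /=; lia.
have [i_gt0 j_gt0] : 0 < i /\ 0 < j by move: m_in; rewrite /in_skew /=; lia.
rewrite /induced_a /=; case: (ltngtP j' j) => [lt_j'j | lt_jj' | j'E]; last by subst j'; lia.
- have up_left : in_skew la mu (i.-1, j.-1) by apply: (in_skew_convex m'_in m_in); lia.
  by have := m_min _ up_left; move: m_c; rewrite /cont /=; lia.
- have right : in_skew la mu (i, j.+1) by apply: (in_skew_convex m_in m'_in); lia.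
  have := m'_min _ right; move: m_c; rewrite /cont /= => m_c /(_ ltac:(lia)) le_j'.
  have [i'E j'E] : i' = i /\ j' = j.+1 by lia.
  by subst i' j'; have [flag_a _] := column_flags_row_pair m_in right; lia.
Qed.

Lemma rightmost_step c M M' : rightmost_of_content la mu r c M ->
  rightmost_of_content la mu r (c + 1)%R M' -> (induced_b la b M - induced_b la b M' <= 1)%R.
Proof.
case: M M' => i j [i' j'] [M_in M_c M_max] [M'_in M'_c M'_max].
have diag : (j' + i = j + i' + 1)%N by move: M_c M'_c; rewrite /cont /=; lia.
have [i_gt0 j_gt0] : 0 < i /\ 0 < j by move: M_in; rewrite /in_skew /=; lia.
rewrite /induced_b /=; case: (ltngtP j' j.+1) => [lt_j'j1 | lt_j1j' | j'E].
- have above : in_skew la mu (i.-1, j) by apply: (in_skew_convex M'_in M_in); lia.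
  have := M'_max _ above; move: M'_c; rewrite /cont /= => M'_c /(_ ltac:(lia)) le_j.
  have [i'E j'E] : i' = i.-1 /\ j' = j by lia.
  by subst i' j'; lia.
- have down_right : in_skew la mu (i.+1, j.+1) by apply: (in_skew_convex M_in M'_in); lia.
  by have := M_max _ down_right; move: M_c; rewrite /cont /=; lia.
- have i'E : i' = i by lia.
  subst i' j'; have [_ flag_b] := column_flags_row_pair M_in M'_in; lia.
Qed.

Lemma leftmost_telescope {c1 c2 m1 m2} : leftmost_of_content la mu r c1 m1 ->
  leftmost_of_content la mu r c2 m2 -> (c1 <= c2)%R ->
  (induced_a mu a m1 - induced_a mu a m2 <= c2 - c1)%R.
Proof.
apply: telescope_bound; [exact: leftmost_unique | | exact: leftmost_step].
by move=> ? ? c ? ? [x_in <- _] [y_in <- _]; apply: leftmost_exists_between.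
Qed.

Lemma rightmost_telescope {c1 c2 M1 M2} : rightmost_of_content la mu r c1 M1 ->
  rightmost_of_content la mu r c2 M2 -> (c1 <= c2)%R ->
  (induced_b la b M1 - induced_b la b M2 <= c2 - c1)%R.
Proof.
apply: telescope_bound; [exact: rightmost_unique | | exact: rightmost_step].
by move=> ? ? c ? ? [x_in <- _] [y_in <- _]; apply: rightmost_exists_between.
Qed.

End SkewShape.

Theorem proposition5p5 (la mu : seq nat) (r : int) (N : nat) (a b : nat -> int)
    (Th : seq (pred cell)) :
  is_partition la -> is_partition mu -> subpart mu la ->
  connected_skew la mu ->
  (nth 0 la 0 <= N)%N ->
  column_flags la mu N a b ->
  outer_ribbon_decomposition la mu Th ->
  forall (i j : nat) (d g : cell),
    (i < size Th)%N -> (j < size Th)%N ->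
    is_head la mu (Th_at Th i) d -> is_tail la mu (Th_at Th j) g ->
    (cont la r d <= cont la r g)%R ->
    forall a' b' : nat -> int,
      induced_flags la mu r Th a b (cont la r d) (cont la r g) a' b' ->
      column_flags (strip_kappa la mu r Th (cont la r d) (cont la r g))
                   (strip_nu la mu r Th (cont la r d) (cont la r g))
                   (strip_K la mu r Th (cont la r d) (cont la r g)) a' b'.
Proof.
move=> la_part mu_part _ la_conn la_N flags [ribbons _ _] i j d g i_lt j_lt head_d tail_g.
have d_in : in_skew la mu d by have [_ sub _ _] := ribbons i i_lt; apply/sub/(andP head_d).1.
have g_in : in_skew la mu g by have [_ sub _ _] := ribbons j j_lt; apply/sub/(andP tail_g).1.
set p := cont la r d; set q := cont la r g => le_pq a' b' induced.
rewrite /induced_flags !(strip_kappaE, strip_nuE, strip_KE) in induced *.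
set up := strip_up la mu r Th p in induced *; set L := strip_len p q in induced *.
have qE : q = (p + L%:Z)%R by rewrite /L /strip_len; lia.
move=> s s_gt0 s_lt _.
have [top_s bot_s] := cont_path_column_ends up L p s ltac:(lia).
have [top_s1 bot_s1] := cont_path_column_ends up L p s.+1 ltac:(lia).
rewrite -qE in top_s bot_s top_s1 bot_s1.
have [m1 lm1] := leftmost_exists_between la_conn d_in g_in top_s.
have [m2 lm2] := leftmost_exists_between la_conn d_in g_in top_s1.
have [M1 rM1] := rightmost_exists_between la_part la_conn d_in g_in bot_s.
have [M2 rM2] := rightmost_exists_between la_part la_conn d_in g_in bot_s1.
have [-> ->] := induced s ltac:(lia) m1 M1 lm1 rM1.
have [-> ->] := induced s.+1 ltac:(lia) m2 M2 lm2 rM2.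
have := conj_succ_le (path_nu up L) s; have := conj_succ_le (path_kappa up L) s.
have := leftmost_telescope la_part mu_part la_conn la_N flags lm1 lm2.
have := rightmost_telescope la_part mu_part la_conn la_N flags rM1 rM2.
by rewrite /induced_a /induced_b /cont /=; lia.
Qed.
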